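(* Let $(G,H)$ be an odd pair, i.e. $H<G$ are countable abelian groups such that every element of $G/H$ has odd order. Then the exact sequence \[0\to H\overset{i}{\to}G\overset{\pi}{\to}G/H\to0\] is coarsely split.
   Context: A proper left invariant metric on a countable group is $d(g,h)=\|g^{-1}h\|$ for a proper norm $\|\cdot\|$ ($\|g\|=0$ iff $g=1$, $\|g\|=\|g^{-1}\|$, $\|gh\|\le\|g\|+\|h\|$, finite balls). A map $f$ is coarse if for every $\delta>0$ there is $\epsilon>0$ with $d(x,y)\le\delta\Rightarrow d(f(x),f(y))\le\epsilon$; a coarse equivalence is a coarse map having a coarse inverse up to bounded distance. An exact sequence $0\to K\overset{i}{\to}G\overset{\pi}{\to}Q\to0$ is coarsely split if there are proper left invariant metrics $d_K,d_G,d_Q$ and a coarse equivalence $f:(G,d_G)\to(K\oplus Q,d_K\oplus d_Q)$ ($\ell_1$ sum metric) such that $f\circ i$ is at bounded distance from $k\mapsto(k,0)$ and $\pi'\circ f$ is at bounded distance from $\pi$, where $\pi':K\oplus Q\to Q$ is the projection. *)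

From HB Require Import structures.
From mathcomp Require Import all_boot all_order all_algebra.
From mathcomp Require Import reals Rstruct.
Set Implicit Arguments. Unset Strict Implicit. Unset Printing Implicit Defensive.
Import Order.TTheory GRing.Theory Num.Theory.
Local Open Scope ring_scope.

Notation Real := Rdefinitions.R.

Definition proper_norm (G : zmodType) (nm : G -> Real) : Prop :=
  [/\ (forall g, nm g = 0 <-> g = 0),
      (forall g, nm (- g) = nm g),
      (forall g h, nm (g + h) <= nm g + nm h)
    & (forall r : Real, exists s : seq G, forall g, nm g <= r -> g \in s)].

Definition norm_metric (G : zmodType) (nm : G -> Real) : G -> G -> Real :=
  fun g h => nm (h - g).

Definition sum_metric (X Y : Type) (dX : X -> X -> Real) (dY : Y -> Y -> Real)
  : X * Y -> X * Y -> Real :=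
  fun u v => dX u.1 v.1 + dY u.2 v.2.

Definition coarse_map (X Y : Type) (dX : X -> X -> Real) (dY : Y -> Y -> Real)
  (f : X -> Y) : Prop :=
  forall delta : Real, 0 < delta -> exists2 eps : Real, 0 < eps &
    forall x y, dX x y <= delta -> dY (f x) (f y) <= eps.

Definition bounded_distance (X Y : Type) (dY : Y -> Y -> Real) (f g : X -> Y) : Prop :=
  exists C : Real, forall x, dY (f x) (g x) <= C.

Definition coarse_equivalence (X Y : Type) (dX : X -> X -> Real) (dY : Y -> Y -> Real)
  (f : X -> Y) : Prop :=
  coarse_map dX dY f /\
  exists g : Y -> X, [/\ coarse_map dY dX g,
     bounded_distance dX (fun x => g (f x)) id
   & bounded_distance dY (fun y => f (g y)) id].

Definition coarsely_split (K G Q : zmodType) (i : K -> G) (pi : G -> Q) : Prop :=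
  exists nK nG nQ,
  [/\ proper_norm nK, proper_norm nG, proper_norm nQ &
   exists f : G -> K * Q,
     let dK := norm_metric nK in let dG := norm_metric nG in
     let dQ := norm_metric nQ in
     [/\ coarse_equivalence dG (sum_metric dK dQ) f,
         bounded_distance (sum_metric dK dQ) (fun k => f (i k)) (fun k => (k, 0))
       & bounded_distance dQ (fun g => (f g).2) pi]].

Definition has_odd_order (Q : zmodType) (q : Q) : Prop :=
  exists n : nat, [/\ (0 < n)%N, q *+ n = 0,
    (forall m : nat, (0 < m)%N -> q *+ m = 0 -> (n <= m)%N) & odd n].

From HB Require Import structures.
From mathcomp Require Import all_boot all_order all_algebra.
From mathcomp Require Import reals Rstruct boolp.
Set Implicit Arguments. Unset Strict Implicit. Unset Printing Implicit Defensive.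
Import Order.TTheory GRing.Theory Num.Theory.
Local Open Scope ring_scope.

(* Let [c_j] be the image in [Q = G/H] of the [j]-th element of [G], and [F_k] the
   subgroup generated by [c_0, ..., c_(k-1)]; it is finite because [Q] is torsion,
   and [Q] is the union of the [F_k].  Each [q] in [F_(k+1)] is [q' + a c_k] with
   [q'] in [F_k] and a least such digit [a]; replacing every [c_j] by the element
   of [G] it comes from yields a set-theoretic section [S] of [G -> Q].  Adding
   [p] in [F_k] to [q] leaves the digits of [q] at levels [>= k] unchanged, so
   [S(q + p) - S(q)] only depends on the [F_k]-part of [q] and takes finitely many
   values.  With the word norm on [G], its restriction to [H] and the quotient
   norm on [Q], this finiteness makes [g |-> (g - S(pi g), pi g)] a coarse
   equivalence [G -> H x Q] with inverse [(h, q) |-> h + S(q)]. *)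

Definition natnorm (T : zmodType) (N : T -> nat) : Prop :=
  [/\ (forall g, N g = 0%N <-> g = 0),
      (forall g, N (- g) = N g),
      (forall g h, (N (g + h)%R <= N g + N h)%N)
    & (forall r : nat, exists s : seq T, forall g, (N g <= r)%N -> g \in s)].

Section NatNorm.
Variables (T : zmodType) (N : T -> nat).
Hypothesis N_norm : natnorm N.

Lemma natnorm0 : N 0 = 0%N.
Proof. by case: N_norm => N0 _ _ _; apply/N0. Qed.

Lemma natnormB (g h : T) : (N (g - h) <= N g + N h)%N.
Proof. by case: N_norm => _ NN ND _; rewrite -[N h]NN ND. Qed.

Lemma natnorm_proper : proper_norm (fun g => (N g)%:R : Rdefinitions.R).
Proof.
case: N_norm => N0 NN ND ballN; split.
- by move=> g; rewrite -N0; split=> [/eqP|->//]; rewrite pnatr_eq0 => /eqP.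
- by move=> g; rewrite NN.
- by move=> g h; rewrite -natrD ler_nat.
- move=> r; have [s ball_s] := ballN (Num.Def.archi_bound `|r|).
  exists s => g Ng_le_r; apply: ball_s; rewrite -(ler_nat Rdefinitions.R); apply: ltW.
  rewrite (le_lt_trans Ng_le_r) // (le_lt_trans (ler_norm r)) //.
  exact: archi_boundP.
Qed.

End NatNorm.

Lemma natnormN_of_le (T : zmodType) (N : T -> nat) :
  (forall g, (N (- g) <= N g)%N) -> forall g, N (- g) = N g.
Proof.
by move=> leN g; apply/eqP; rewrite eqn_leq leN /= -{1}[g]opprK leN.
Qed.

Lemma injective_preimage_seq (A B : eqType) (f : A -> B) :
  injective f -> forall s : seq B, exists t : seq A, forall a, f a \in s -> a \in t.
Proof.
move=> f_inj; elim=> [|b s [t mem_t]]; first by exists [::].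
case: (pselect (exists a, f a = b)) => [[a0 fa0]|no_pre].
  exists (a0 :: t) => a; rewrite !in_cons => /orP[/eqP fab|/mem_t ->]; last first.
    by rewrite orbT.
  by rewrite -fa0 in fab; rewrite (f_inj _ _ fab) eqxx.
exists t => a; rewrite in_cons => /orP[/eqP fab|/mem_t //].
by case: no_pre; exists a.
Qed.

Lemma natnorm_comp (H G : zmodType) (N : G -> nat) (i : {additive H -> G}) :
  natnorm N -> injective i -> natnorm (N \o i).
Proof.
move=> N_norm i_inj; have [N0 NN ND ballN] := N_norm; split=> /=.
- move=> h; split=> [/N0 ih0|->]; last by rewrite raddf0 natnorm0.
  by apply: i_inj; rewrite ih0 raddf0.
- by move=> h; rewrite raddfN NN.
- by move=> g h; rewrite raddfD ND.
- move=> r; have [s ball_s] := ballN r.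
  have [t mem_t] := injective_preimage_seq i_inj s.
  by exists t => h /ball_s /mem_t.
Qed.

Lemma fiber_min_subproof (A B : Type) (f : A -> nat) (p : A -> B) (b : B) :
  (exists a, p a = b) -> exists m, `[< exists a, p a = b /\ (f a <= m)%N >].
Proof. by case=> a pa; exists (f a); apply/asboolP; exists a. Qed.

(* Junk value [0] on an empty fibre. *)
Definition fiber_min (A B : Type) (f : A -> nat) (p : A -> B) (b : B) : nat :=
  if pselect (exists a, p a = b) is left ex then ex_minn (fiber_min_subproof f ex)
  else 0%N.

Section FiberMin.
Variables (A B : Type) (f : A -> nat) (p : A -> B).

Lemma fiber_min_le a : (fiber_min f p (p a) <= f a)%N.
Proof.
rewrite /fiber_min; case: pselect => [ex|[]]; last by exists a.
by case: ex_minnP => m _; apply; apply/asboolP; exists a.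
Qed.

Lemma fiber_min_attained b :
  (exists a, p a = b) -> exists a, p a = b /\ f a = fiber_min f p b.
Proof.
move=> ex; rewrite /fiber_min; case: pselect => // ex'.
case: ex_minnP => m /asboolP [a [pa fa]] m_min; exists a; split=> //.
by apply/eqP; rewrite eqn_leq fa m_min //; apply/asboolP; exists a.
Qed.

End FiberMin.

Lemma natnorm_quotient (G Q : zmodType) (N : G -> nat) (pi : {additive G -> Q}) :
  natnorm N -> (forall q, exists g, pi g = q) -> natnorm (fiber_min N pi).
Proof.
move=> N_norm pi_onto; have [N0 NN ND ballN] := N_norm.
have attained q := fiber_min_attained N (pi_onto q).
split.
- move=> q; split=> [|->]; last first.
    by apply/eqP; rewrite -leqn0 -(natnorm0 N_norm) -{1}(raddf0 pi) fiber_min_le.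
  by have [g [<- <-]] := attained q; move/N0 ->; rewrite raddf0.
- apply: natnormN_of_le => q; have [g [<- <-]] := attained q.
  by rewrite -raddfN -NN fiber_min_le.
- move=> q r; have [g [<- <-]] := attained q; have [h [<- <-]] := attained r.
  by rewrite -raddfD (leq_trans (fiber_min_le _ _ _)).
- move=> r; have [s ball_s] := ballN r; exists (map pi s) => q.
  by have [g [<- <-]] := attained q; move/ball_s; apply: map_f.
Qed.

Fixpoint seqs_upto (T : Type) (n : nat) (s : seq T) : seq (seq T) :=
  if n is n'.+1 then [::] :: [seq x :: w | x <- s, w <- seqs_upto n' s]
  else [:: [::]].

Lemma mem_seqs_upto (T : eqType) n (s w : seq T) :
  (size w <= n)%N -> all (mem s) w -> w \in seqs_upto n s.
Proof.
elim: n w => [|n IHn] [|x w] //= size_w /andP[xs ws].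
by rewrite in_cons; apply/orP; right; apply/allpairsPdep; exists x, w; rewrite IHn.
Qed.

Section WordNorm.
Variable G : countZmodType.

(* The generator [x] of the word norm costs more than [pickle x] and [pickle (- x)],
   so that balls only use finitely many generators and the norm is symmetric. *)
Definition letter_weight (x : G) : nat := (pickle x + pickle (- x)).+1.

Definition word_weight (w : seq G) : nat := \sum_(x <- w) letter_weight x.

Definition word_norm : G -> nat := fiber_min word_weight (fun w => \sum_(x <- w) x).

Lemma word_weight_cons x w :
  word_weight (x :: w) = (letter_weight x + word_weight w)%N.
Proof. by rewrite /word_weight big_cons. Qed.

Lemma size_le_word_weight w : (size w <= word_weight w)%N.
Proof. by elim: w => //= x w IHw; rewrite word_weight_cons -add1n leq_add. Qed.

Lemma letter_weight_le_word x w : x \in w -> (letter_weight x <= word_weight w)%N.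
Proof.
elim: w => //= y w IHw; rewrite in_cons word_weight_cons.
by case/orP=> [/eqP->|/IHw /leq_trans->//]; rewrite ?leq_addr ?leq_addl.
Qed.

Lemma mem_word_ball m w :
  (word_weight w <= m)%N -> w \in seqs_upto m (pmap (@unpickle G) (iota 0 m)).
Proof.
move=> wm; apply: mem_seqs_upto; first exact: leq_trans (size_le_word_weight w) wm.
apply/allP => x xw; rewrite inE mem_pmap; apply/mapP.
exists (pickle x); last by rewrite pickleK.
rewrite mem_iota /= (leq_trans _ (leq_trans (letter_weight_le_word xw) wm)) //.
by rewrite ltnS leq_addr.
Qed.

Lemma word_norm_natnorm : natnorm word_norm.
Proof.
have attained g : exists w, \sum_(x <- w) x = g /\ word_weight w = word_norm g.
  by apply: fiber_min_attained; exists [:: g]; rewrite big_seq1.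
have norm_le (w : seq G) : (word_norm (\sum_(x <- w) x)%R <= word_weight w)%N.
  exact: fiber_min_le.
split.
- move=> g; split=> [|->]; last first.
    by apply/eqP; rewrite -leqn0; have := norm_le [::]; rewrite /word_weight !big_nil.
  have [[|x w] [<- <-]] := attained g; first by rewrite big_nil.
  by rewrite word_weight_cons.
- apply: natnormN_of_le => g; have [w [<- <-]] := attained g.
  have -> : - \sum_(x <- w) x = \sum_(x <- map -%R w) x by rewrite big_map sumrN.
  rewrite (leq_trans (norm_le _)) // /word_weight big_map.
  by apply: leq_sum => x _; rewrite /letter_weight opprK addnC.
- move=> g h; have [v [<- <-]] := attained g; have [w [<- <-]] := attained h.
  by rewrite -big_cat (leq_trans (norm_le _)) // /word_weight big_cat.
- move=> r; set ball := seqs_upto r (pmap (@unpickle G) (iota 0 r)).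
  exists (map (fun w => \sum_(x <- w) x) ball) => g; have [w [<- <-]] := attained g.
  by move/mem_word_ball; apply: map_f.
Qed.

End WordNorm.

Definition finite_differences (Q G : zmodType) (S : Q -> G) : Prop :=
  forall p, exists D : seq G, forall q, S (q + p) - S q \in D.

Lemma mulrn_modn (V : zmodType) (x : V) m a : x *+ m = 0 -> x *+ a = x *+ (a %% m).
Proof. by move=> xm0; rewrite {1}(divn_eq a m) mulrnDr mulnC mulrnA xm0 mul0rn add0r. Qed.

Section DigitSection.
Variables (Q G : zmodType) (c : nat -> Q) (n : nat -> nat) (w : nat -> G).
Hypotheses (n_gt0 : forall j, (0 < n j)%N) (c_order : forall j, c j *+ n j = 0).

(* The finite subgroup generated by [c 0, ..., c k.-1], listed with repetitions. *)
Fixpoint span_seq k : seq Q :=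
  if k is k'.+1 then [seq x + c k' *+ a | x <- span_seq k', a <- iota 0 (n k')]
  else [:: 0].

Lemma span_seqS k x a : x \in span_seq k -> x + c k *+ a \in span_seq k.+1.
Proof.
move=> xk; rewrite (mulrn_modn a (c_order k)); apply/allpairsP.
by exists (x, (a %% n k)%N); rewrite /= mem_iota ltn_pmod.
Qed.

Lemma span_seqSP k y :
  y \in span_seq k.+1 -> exists x a, x \in span_seq k /\ y = x + c k *+ a.
Proof. by case/allpairsP=> [[x a] [/= xk _ ->]]; exists x, a. Qed.

Lemma span_seq0 k : 0 \in span_seq k.
Proof.
elim: k => [|k IHk]; first exact: mem_head.
by have := span_seqS 0 IHk; rewrite mulr0n addr0.
Qed.

Lemma span_seq_mono k m x : (k <= m)%N -> x \in span_seq k -> x \in span_seq m.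
Proof.
move=> /subnK <- xk; elim: (m - k)%N => //= d IHd.
by have := span_seqS 0 IHd; rewrite mulr0n addr0.
Qed.

Lemma span_seqD k x y : x \in span_seq k -> y \in span_seq k -> x + y \in span_seq k.
Proof.
elim: k x y => [|k IHk] x y; first by rewrite !mem_seq1 => /eqP-> /eqP->; rewrite addr0.
case/span_seqSP=> [x' [a [x'k ->]]] /span_seqSP [y' [b [y'k ->]]].
by rewrite addrACA -mulrnDr span_seqS ?IHk.
Qed.

Lemma span_seqN k x : x \in span_seq k -> - x \in span_seq k.
Proof.
elim: k x => [|k IHk] x; first by rewrite !mem_seq1 => /eqP->; rewrite oppr0.
case/span_seqSP=> [x' [a [x'k ->]]].
have -> : - (x' + c k *+ a) = - x' + c k *+ (a * (n k).-1).
  rewrite opprD; congr (_ + _); apply: (addrI (c k *+ a)).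
  by rewrite subrr -mulrnDr -mulnS prednK // mulnC mulrnA c_order mul0rn.
by rewrite span_seqS ?IHk.
Qed.

Definition digit k q : nat :=
  find (fun a => q - c k *+ a \in span_seq k) (iota 0 (n k)).

Lemma digit_spec k q : q \in span_seq k.+1 -> q - c k *+ digit k q \in span_seq k.
Proof.
case/span_seqSP=> [x [a [xk ->]]].
set P := fun b => x + c k *+ a - c k *+ b \in span_seq k.
have hasP : has P (iota 0 (n k)).
  apply/hasP; exists (a %% n k)%N; first by rewrite mem_iota ltn_pmod.
  by rewrite /P -(mulrn_modn a (c_order k)) addrK.
have := nth_find 0 hasP; rewrite nth_iota ?add0n //.
by rewrite -[X in (_ < X)%N](size_iota 0) -has_find.
Qed.

Lemma digit_eq0 k q : q \in span_seq k -> digit k q = 0%N.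
Proof.
by move=> qk; rewrite /digit; case: (n k) (n_gt0 k) => //= m _; rewrite mulr0n subr0 qk.
Qed.

Lemma digit_shift k q p : p \in span_seq k -> digit k (q + p) = digit k q.
Proof.
move=> pk; apply: eq_find => a /=; rewrite addrAC.
apply/idP/idP=> [|qa]; last exact: span_seqD.
by move/span_seqD/(_ (span_seqN pk)); rewrite addrK.
Qed.

Fixpoint digit_lift k q : G :=
  if k is k'.+1 then w k' *+ digit k' q + digit_lift k' (q - c k' *+ digit k' q)
  else 0.

Lemma digit_liftK (pi : {additive G -> Q}) :
  (forall j, pi (w j) = c j) -> forall k q, q \in span_seq k -> pi (digit_lift k q) = q.
Proof.
move=> pi_w; elim=> [q|k IHk q qk] /=.
  by rewrite mem_seq1 => /eqP->; rewrite raddf0.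
by rewrite raddfD raddfMn pi_w IHk ?digit_spec // addrC subrK.
Qed.

Lemma digit_lift_stable k m q :
  (k <= m)%N -> q \in span_seq k -> digit_lift m q = digit_lift k q.
Proof.
move=> /subnK <- qk; elim: (m - k)%N => // d IHd.
rewrite addSn /= digit_eq0 ?mulr0n ?subr0 ?add0r //.
exact/(span_seq_mono _ qk)/leq_addl.
Qed.

Lemma digit_lift_shift k p m q :
  p \in span_seq k -> (k <= m)%N -> q \in span_seq m ->
  digit_lift m (q + p) - digit_lift m q \in
    [seq digit_lift k (u + p) - digit_lift k u | u <- span_seq k].
Proof.
move=> pk; elim: m q => [|m IHm] q.
  by rewrite leqn0 => /eqP k0 qk; subst k; apply: (map_f (fun u => _)).
rewrite leq_eqVlt ltnS => /orP[/eqP <- qk|km qm]; first exact: (map_f (fun u => _)).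
have pm := span_seq_mono km pk.
rewrite /= digit_shift // opprD addrACA subrr add0r (addrAC q p).
exact: IHm (digit_spec qm).
Qed.

Hypothesis span_seq_exhaustive : forall q, exists k, q \in span_seq k.

Definition level q : nat := xchoose (span_seq_exhaustive q).

Lemma mem_span_seq_level q : q \in span_seq (level q).
Proof. exact: (xchooseP (span_seq_exhaustive q)). Qed.

Definition digit_section q : G := digit_lift (level q) q.

Lemma digit_sectionK (pi : {additive G -> Q}) :
  (forall j, pi (w j) = c j) -> cancel digit_section pi.
Proof.
by move=> pi_w q; rewrite /digit_section (digit_liftK pi_w) ?mem_span_seq_level.
Qed.

Lemma digit_section0 : digit_section 0 = 0.
Proof. by rewrite /digit_section (@digit_lift_stable 0) // span_seq0. Qed.

Lemma finite_differences_digit_section : finite_differences digit_section.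
Proof.
move=> p; exists [seq digit_lift (level p) (u + p) - digit_lift (level p) u
                  | u <- span_seq (level p)] => q.
set m := maxn (level p) (maxn (level q) (level (q + p))).
have [le_p_m le_q_m le_qp_m] :
    [/\ (level p <= m)%N, (level q <= m)%N & (level (q + p)%R <= m)%N].
  by rewrite !leq_max !leqnn !orbT.
rewrite /digit_section -(digit_lift_stable le_qp_m) ?mem_span_seq_level //.
rewrite -(digit_lift_stable le_q_m) ?mem_span_seq_level //.
apply: digit_lift_shift => //; first exact: mem_span_seq_level.
exact: span_seq_mono le_q_m (mem_span_seq_level _).
Qed.

End DigitSection.

Lemma torsion_section (G : countZmodType) (Q : zmodType) (pi : {additive G -> Q}) :
  (forall q, exists g, pi g = q) ->
  (forall q : Q, exists n, (0 < n)%N && (q *+ n == 0)) ->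
  exists S : Q -> G, [/\ cancel S pi, S 0 = 0 & finite_differences S].
Proof.
move=> pi_onto torsion.
pose e j : G := odflt 0 (unpickle j); pose c j := pi (e j).
pose n j := ex_minn (torsion (c j)).
have n_spec j : (0 < n j)%N && (c j *+ n j == 0) by rewrite /n; case: ex_minnP.
have n_gt0 j : (0 < n j)%N by case/andP: (n_spec j).
have c_order j : c j *+ n j = 0 by case/andP: (n_spec j) => _ /eqP.
have exhaustive q : exists k, q \in span_seq c n k.
  have [g <-] := pi_onto q; exists (pickle g).+1.
  have -> : pi g = 0 + c (pickle g) *+ 1 by rewrite add0r /c /e pickleK.
  exact/span_seqS/span_seq0.
exists (digit_section e exhaustive); split.
- exact: digit_sectionK.
- exact: digit_section0.
- exact: finite_differences_digit_section.
Qed.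

Lemma coarse_map_nat (X Y : Type) (dX : X -> X -> Rdefinitions.R)
    (dY : Y -> Y -> Rdefinitions.R) (DX : X -> X -> nat) (DY : Y -> Y -> nat)
    (f : X -> Y) :
  (forall x y, dX x y = (DX x y)%:R) -> (forall u v, dY u v = (DY u v)%:R) ->
  (forall m, exists B, forall x y, (DX x y <= m)%N -> (DY (f x) (f y) <= B)%N) ->
  coarse_map dX dY f.
Proof.
move=> dXE dYE f_bnd delta _; have [B fB] := f_bnd (Num.Def.archi_bound `|delta|).
exists B.+1%:R => [|x y dxy]; first by rewrite ltr0n.
rewrite dYE ler_nat (leq_trans (fB x y _)) //.
rewrite -(ler_nat Rdefinitions.R) -dXE ltW // (le_lt_trans dxy) //.
by rewrite (le_lt_trans (ler_norm delta)) // archi_boundP.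
Qed.

Lemma bounded_distance_eq (X Y : Type) (dY : Y -> Y -> Rdefinitions.R) (f g : X -> Y) :
  (forall y, dY y y = 0) -> f =1 g -> bounded_distance dY f g.
Proof. by move=> dY0 fg; exists 0 => x; rewrite fg dY0. Qed.

Section SplittingBySection.
Variables (G H Q : zmodType) (i : {additive H -> G}) (pi : {additive G -> Q}).
Variables (NG : G -> nat) (S : Q -> G).
Hypotheses (i_inj : injective i) (pi_ker : forall g, pi g = 0 <-> exists h, g = i h).
Hypotheses (NG_norm : natnorm NG) (SK : cancel S pi) (S0 : S 0 = 0).
Hypothesis S_fin : finite_differences S.

Let NH := NG \o i.
Let NQ := fiber_min NG pi.

Lemma NQ_natnorm : natnorm NQ.
Proof. exact: natnorm_quotient NG_norm (fun q => ex_intro _ (S q) (SK q)). Qed.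

Lemma pi_i h : pi (i h) = 0.
Proof. by apply/pi_ker; exists h. Qed.

Lemma hcoord_subproof g : exists h, i h == g - S (pi g).
Proof.
have [h ->] : exists h, g - S (pi g) = i h by apply/pi_ker; rewrite raddfB SK subrr.
by exists h.
Qed.

Definition hcoord g : H := xchoose (hcoord_subproof g).

Lemma hcoordK g : i (hcoord g) = g - S (pi g).
Proof. exact/eqP/(xchooseP (hcoord_subproof g)). Qed.

Lemma hcoord_lift h q : hcoord (i h + S q) = h.
Proof. by apply: i_inj; rewrite hcoordK raddfD pi_i add0r SK addrK. Qed.

Lemma hcoord_i h : hcoord (i h) = h.
Proof. by rewrite -[i h]addr0 -S0 hcoord_lift. Qed.

Lemma lift_hcoord g : i (hcoord g) + S (pi g) = g.
Proof. by rewrite hcoordK subrK. Qed.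

Lemma differences_bounded (ps : seq Q) :
  exists M, forall p q, p \in ps -> (NG (S (q + p) - S q) <= M)%N.
Proof.
elim: ps => [|p ps [M ps_bnd]]; first by exists 0%N.
have [D memD] := S_fin p.
exists (maxn (\max_(d <- D) NG d) M) => p' q; rewrite in_cons => /orP[/eqP->|p'ps].
  by rewrite (leq_trans _ (leq_maxl _ _)) // (leq_bigmax_seq _ (memD q)).
by rewrite (leq_trans _ (leq_maxr _ _)) // ps_bnd.
Qed.

Lemma coarse_hcoord_pi m : exists B, forall x y, (NG (y - x) <= m)%N ->
  (NH (hcoord y - hcoord x) + NQ (pi y - pi x) <= B)%N.
Proof.
have [_ _ _ ballG] := NG_norm; have [s ball_s] := ballG m.
have [M S_bnd] := differences_bounded (map pi s).
exists (m + M + m)%N => x y dxy; apply: leq_add; last first.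
  by rewrite -raddfB (leq_trans (fiber_min_le _ _ _)).
have pi_y : pi x + pi (y - x) = pi y by rewrite raddfB addrC subrK.
rewrite /NH /=.
have -> : i (hcoord y - hcoord x) = (y - x) - (S (pi x + pi (y - x)) - S (pi x)).
  by rewrite pi_y raddfB !hcoordK !opprB addrACA [RHS]addrACA [- S _ + _]addrC.
by rewrite (leq_trans (natnormB NG_norm _ _)) // leq_add // S_bnd // map_f // ball_s.
Qed.

Lemma coarse_lift m : exists B, forall u v : H * Q,
  (NH (v.1 - u.1) + NQ (v.2 - u.2) <= m)%N ->
  (NG ((i v.1 + S v.2) - (i u.1 + S u.2)) <= B)%N.
Proof.
have [_ _ _ ballQ] := NQ_natnorm.
have [s ball_s] := ballQ m; have [M S_bnd] := differences_bounded s.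
have [_ _ NGD _] := NG_norm.
exists (m + M)%N => u v duv; rewrite opprD addrACA -raddfB.
rewrite (leq_trans (NGD _ _)) // leq_add //.
  exact: leq_trans (leq_addr _ _) duv.
have := S_bnd (v.2 - u.2) u.2 (ball_s _ (leq_trans (leq_addl _ _) duv)).
by rewrite [u.2 + _]addrC subrK.
Qed.

Lemma coarsely_split_by_section : coarsely_split i pi.
Proof.
exists (fun h => (NH h)%:R), (fun g => (NG g)%:R), (fun q => (NQ q)%:R).
split; [exact: natnorm_proper (natnorm_comp NG_norm i_inj) |
        exact: natnorm_proper NG_norm | exact: natnorm_proper NQ_natnorm |].
exists (fun g => (hcoord g, pi g)) => /=.
have sum_metricE (u v : H * Q) : sum_metric (norm_metric (fun h => (NH h)%:R))
    (norm_metric (fun q => (NQ q)%:R)) u v = (NH (v.1 - u.1) + NQ (v.2 - u.2))%:R.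
  by rewrite /sum_metric /norm_metric natrD.
have sum_metric0 (u : H * Q) : sum_metric (norm_metric (fun h => (NH h)%:R))
    (norm_metric (fun q => (NQ q)%:R)) u u = 0.
  by rewrite sum_metricE !subrr /NH /= raddf0 (natnorm0 NG_norm) (natnorm0 NQ_natnorm).
split; [split|apply: bounded_distance_eq => //= h..].
- apply: (coarse_map_nat (DX := fun x y => NG (y - x))
    (DY := fun u v => NH (v.1 - u.1) + NQ (v.2 - u.2))%N) => //.
  exact: coarse_hcoord_pi.
- exists (fun u => i u.1 + S u.2); split.
  + apply: (coarse_map_nat (DY := fun x y => NG (y - x))
      (DX := fun u v => NH (v.1 - u.1) + NQ (v.2 - u.2))%N) => //.
    exact: coarse_lift.
  + apply: bounded_distance_eq => g; last exact: lift_hcoord.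
    by rewrite /norm_metric subrr (natnorm0 NG_norm).
  + apply: bounded_distance_eq => // -[h q].
    by rewrite /= hcoord_lift raddfD pi_i SK add0r.
- by rewrite hcoord_i pi_i.
- by rewrite /norm_metric subrr (natnorm0 NQ_natnorm).
Qed.

End SplittingBySection.

Theorem mainTheorem4 (G : countZmodType) (H Q : zmodType)
  (i : {additive H -> G}) (pi : {additive G -> Q}) :
  injective i ->
  (forall q : Q, exists g : G, pi g = q) ->
  (forall g : G, pi g = 0 <-> exists h : H, g = i h) ->
  (forall q : Q, has_odd_order q) ->
  coarsely_split i pi.
Proof.
move=> i_inj pi_onto pi_ker odd_order.
have torsion (q : Q) : exists n, (0 < n)%N && (q *+ n == 0).
  by have [n [n_gt0 qn0 _ _]] := odd_order q; exists n; rewrite n_gt0 qn0 eqxx.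
have [S [SK S0 S_fin]] := torsion_section pi_onto torsion.
exact: coarsely_split_by_section i_inj pi_ker (word_norm_natnorm G) SK S0 S_fin.
Qed.
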